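(* The element $g_{-1}(x):=x-2$ lies in $\mathcal{F}_{-1}$ and is invertible in $\mathbb{K}[[x]]$, and the $\mathbb{Z}$-graded algebra $\mathcal{F}=\bigoplus_{r\in\mathbb{Z}}\mathcal{F}_r$ is isomorphic to the algebra $\mathcal{F}_0[T,T^{-1}]$ of Laurent polynomials in a variable $T$ of degree $-1$ with coefficients in $\mathcal{F}_0$, via the map sending $\rho\,T^{j}$ ($\rho\in\mathcal{F}_0$, $j\in\mathbb{Z}$) to $\rho(x)(x-2)^{j}\in\mathcal{F}_{-j}$.
   Context: $\mathbb{K}$ is one of $\mathbb{Q},\mathbb{R},\mathbb{C}$. For $r\in\mathbb{Z}$, $\mathcal{F}_r\subset\mathbb{K}[[x]]$ is the space of formal power series $\varphi$ with $\varphi(x/(x-1))=(1-x)^r\varphi(x)$. $\mathcal{F}=\bigoplus_r\mathcal{F}_r$ is the $\mathbb{Z}$-graded algebra with homogeneous components $\mathcal{F}_r$ and multiplication given on homogeneous elements by the Cauchy product (which maps $\mathcal{F}_r\times\mathcal{F}_s$ into $\mathcal{F}_{r+s}$). *)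

From mathcomp Require Import all_boot all_order all_algebra.
From mathcomp Require Import complex Rstruct.
Set Implicit Arguments. Unset Strict Implicit. Unset Printing Implicit Defensive.
Import Order.TTheory GRing.Theory Num.Theory.
Local Open Scope ring_scope.

Inductive Kchoice := KQ | KR | KC.

Definition Kfield (k : Kchoice) : fieldType :=
  match k with
  | KQ => rat
  | KR => Rdefinitions.R
  | KC => (Rdefinitions.R)[i]%C
  end.

Section Series.
Variable K : fieldType.

Definition series := nat -> K.

Definition szero : series := fun _ => 0.
Definition sone : series := fun n => if n == 0%N then 1 else 0.
Definition sX : series := fun n => if n == 1%N then 1 else 0.
Definition sC (c : K) : series := fun n => if n == 0%N then c else 0.
Definition sadd (f g : series) : series := fun n => f n + g n.
Definition sopp (f : series) : series := fun n => - f n.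
Definition sscale (c : K) (f : series) : series := fun n => c * f n.
Definition smul (f g : series) : series :=
  fun n => \sum_(i < n.+1) f i * g (n - i)%N.
Definition spow (f : series) (k : nat) : series := iter k (smul f) sone.

(* Multiplicative inverse of a series with nonzero constant term:
   b_0 = 1/f_0, b_(n+1) = -(1/f_0) * sum_(i=1)^(n+1) f_i b_(n+1-i). *)
Fixpoint sinv_list (f : series) (n : nat) : seq K :=
  match n with
  | 0%N => [:: (f 0%N)^-1]
  | m.+1 => let l := sinv_list f m in
      rcons l (- (f 0%N)^-1 * \sum_(i < m.+1) f i.+1 * nth 0 l (m - i)%N)
  end.
Definition sinv (f : series) : series := fun n => nth 0 (sinv_list f n) n.

(* Integer powers (for r < 0 this is the inverse of f^|r|). *)
Definition spowz (f : series) (r : int) : series :=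
  match r with
  | Posz n => spow f n
  | Negz n => sinv (spow f n.+1)
  end.

(* Composition f(s) for a series s with zero constant term:
   coefficient n is sum_(k <= n) f_k [x^n] s^k. *)
Definition scomp (f s : series) : series :=
  fun n => \sum_(k < n.+1) f k * spow s k n.

Definition sMoeb : series := smul sX (sinv (sadd sX (sopp sone))).
Definition s1mX : series := sadd sone (sopp sX).

Definition inF (r : int) (phi : series) : Prop :=
  scomp phi sMoeb = smul (spowz s1mX r) phi.

Definition gm1 : series := sadd sX (sC (-2)).

Definition zfam := int -> series.

Definition supported_in (N : nat) (f : zfam) : Prop :=
  forall r : int, (N < `|r|)%N -> f r = szero.
Definition fin_supp (f : zfam) : Prop := exists N, supported_in N f.

Definition graded_elt (f : zfam) : Prop :=
  fin_supp f /\ forall r, inF r (f r).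
(* Elements of F_0[T,T^-1] : c j is the coefficient of T^j, in F_0. *)
Definition laurent_elt (c : zfam) : Prop :=
  fin_supp c /\ forall j, inF 0 (c j).

Definition fadd (f g : zfam) : zfam := fun r => sadd (f r) (g r).
Definition fscale (a : K) (f : zfam) : zfam := fun r => sscale a (f r).
Definition fone : zfam := fun r => if r == 0 then sone else szero.
(* Product (convolution over Z); for families supported in [-N,N] this is
   exactly the product in the graded algebra / Laurent polynomial ring. *)
Definition fconv (N : nat) (f g : zfam) : zfam :=
  fun r n => \sum_(i < (2 * N).+1)
    smul (f (i%:Z - N%:Z)) (g (r - (i%:Z - N%:Z))) n.

Definition Phi (c : zfam) : zfam :=
  fun r => smul (c (- r)) (spowz gm1 (- r)).

End Series.

From HB Require Import structures.
From mathcomp Require Import all_boot all_order all_algebra.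
From mathcomp Require Import boolp zify ring complex Rstruct.

(* Formal power series form a commutative ring whose units are the series with
   nonzero constant term, and substituting a series without constant term, such
   as x/(x-1), is a ring morphism.  The ring laws and the multiplicativity of
   substitution are inherited from polynomials, since below order n a series
   behaves like its truncation at order n.  Hence the defining condition of F_r
   is multiplicative: F_r F_s lies in F_(r+s), and F_(-r) contains the inverse
   of any unit of F_r.  Substituting x/(x-1) in x-2 gives (x-2)/(1-x), so
   g = x-2 lies in F_(-1), and g is a unit as soon as 2 != 0.  Multiplication
   by g^j is then a bijection F_0 -> F_(-j) with inverse multiplication by
   g^(-j); this gives the isomorphism degree by degree, and its compatibility
   with products is the law g^i g^j = g^(i+j). *)

Import GRing.Theory Num.Theory.
Local Open Scope ring_scope.

Section SeriesRing.
Context {K : fieldType}.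
Implicit Types (f g h : series K) (p q : {poly K}).

Definition trunc (n : nat) f : {poly K} := \poly_(i < n.+1) f i.

Definition eq_upto (n : nat) p q := forall i, (i <= n)%N -> p`_i = q`_i.

Lemma coef_trunc {n} f {i} : (i <= n)%N -> (trunc n f)`_i = f i.
Proof. by move=> le_in; rewrite coef_poly ltnS le_in. Qed.

Lemma eq_upto_trans n p q r : eq_upto n p q -> eq_upto n q r -> eq_upto n p r.
Proof. by move=> Hpq Hqr i le_in; rewrite Hpq // Hqr. Qed.

Lemma eq_uptoM n p p' q q' :
  eq_upto n p p' -> eq_upto n q q' -> eq_upto n (p * q) (p' * q').
Proof.
move=> Hp Hq i le_in; rewrite !coefM; apply: eq_bigr => j _.
have le_jn : (j <= n)%N by apply: leq_trans le_in; rewrite -ltnS.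
by rewrite Hp // Hq // (leq_trans (leq_subr _ _) le_in).
Qed.

Lemma trunc_smul n f g : eq_upto n (trunc n (smul f g)) (trunc n f * trunc n g).
Proof.
move=> i le_in; rewrite coef_trunc // coefM; apply: eq_bigr => j _.
have le_jn : (j <= n)%N by apply: leq_trans le_in; rewrite -ltnS.
by rewrite !coef_trunc // (leq_trans (leq_subr _ _) le_in).
Qed.

Lemma trunc_sadd n f g : eq_upto n (trunc n (sadd f g)) (trunc n f + trunc n g).
Proof. by move=> i le_in; rewrite coefD !coef_trunc. Qed.

Lemma trunc_sone n : trunc n (sone K) = 1.
Proof. by apply/polyP => -[|i]; rewrite coef_poly coef1 //=; case: ifP. Qed.

Lemma series_eq_upto {f g} (P : nat -> {poly K}) :
  (forall n, eq_upto n (trunc n f) (P n)) ->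
  (forall n, eq_upto n (trunc n g) (P n)) -> f = g.
Proof.
move=> Hf Hg; apply: funext => n.
by rewrite -(coef_trunc f (leqnn n)) Hf // -Hg // coef_trunc.
Qed.

Lemma smulA : associative (@smul K).
Proof.
move=> f g h; apply: (series_eq_upto (fun n => trunc n f * trunc n g * trunc n h)).
  move=> n; rewrite -mulrA; apply: eq_upto_trans (trunc_smul _ _ _) _.
  exact: eq_uptoM (trunc_smul _ _ _).
move=> n; apply: eq_upto_trans (trunc_smul _ _ _) _.
exact: eq_uptoM (trunc_smul _ _ _) _.
Qed.

Lemma smulC : commutative (@smul K).
Proof.
move=> f g; apply: (series_eq_upto (fun n => trunc n f * trunc n g)) => n.
  exact: trunc_smul.
by rewrite mulrC; exact: trunc_smul.
Qed.

Lemma smul1 : left_id (sone K) (@smul K).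
Proof.
move=> f; apply: (series_eq_upto (fun n => trunc n f)) => // n.
by apply: eq_upto_trans (trunc_smul _ _ _) _; rewrite trunc_sone mul1r.
Qed.

Lemma smulDl : left_distributive (@smul K) (@sadd K).
Proof.
move=> f g h.
apply: (series_eq_upto (fun n => trunc n f * trunc n h + trunc n g * trunc n h)).
  move=> n; apply: eq_upto_trans (trunc_smul _ _ _) _; rewrite -mulrDl.
  exact: eq_uptoM (trunc_sadd _ _ _) _.
move=> n; apply: eq_upto_trans (trunc_sadd _ _ _) _ => i le_in.
by rewrite !coefD (trunc_smul _ _ _ _ le_in) (trunc_smul _ _ _ _ le_in).
Qed.

Lemma saddA : associative (@sadd K).
Proof. by move=> f g h; apply: funext => n; rewrite /sadd addrA. Qed.

Lemma saddC : commutative (@sadd K).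
Proof. by move=> f g; apply: funext => n; rewrite /sadd addrC. Qed.

Lemma sadd0 : left_id (szero K) (@sadd K).
Proof. by move=> f; apply: funext => n; rewrite /sadd add0r. Qed.

Lemma saddN : left_inverse (szero K) (@sopp K) (@sadd K).
Proof. by move=> f; apply: funext => n; rewrite /sadd /sopp addNr. Qed.

Lemma sone_neq0 : sone K != szero K.
Proof. by apply/eqP => /(congr1 (fun f => f 0%N)) /eqP; rewrite oner_eq0. Qed.

End SeriesRing.

HB.instance Definition _ (K : fieldType) := gen_eqMixin (series K).
HB.instance Definition _ (K : fieldType) := gen_choiceMixin (series K).
HB.instance Definition _ (K : fieldType) :=
  GRing.isZmodule.Build (series K) (@saddA K) (@saddC K) (@sadd0 K) (@saddN K).
HB.instance Definition _ (K : fieldType) :=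
  GRing.Zmodule_isComNzRing.Build (series K)
    (@smulA K) (@smulC K) (@smul1 K) (@smulDl K) (@sone_neq0 K).

Section SeriesInverse.
Context {K : fieldType}.
Implicit Types f g : series K.

Lemma smulE f g : smul f g = f * g. Proof. by []. Qed.
Lemma saddE f g : sadd f g = f + g. Proof. by []. Qed.
Lemma soneE : sone K = 1. Proof. by []. Qed.
Lemma szeroE : szero K = 0. Proof. by []. Qed.

Lemma coefMs f g n : (f * g) n = \sum_(i < n.+1) f i * g (n - i)%N.
Proof. by []. Qed.
Lemma coefDs f g n : (f + g) n = f n + g n. Proof. by []. Qed.
Lemma coefNs f n : (- f) n = - f n. Proof. by []. Qed.
Lemma coef1s n : (1 : series K) n = (n == 0%N)%:R. Proof. by case: n. Qed.

Lemma coefM0 f g : (f * g) 0%N = f 0%N * g 0%N.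
Proof. by rewrite coefMs big_ord1. Qed.

Lemma coef_sum_series (I : Type) (r : seq I) (P : pred I) (F : I -> series K) n :
  (\sum_(i <- r | P i) F i) n = \sum_(i <- r | P i) F i n.
Proof. by elim/big_rec2: _ => // i x y _ <-. Qed.

Lemma size_sinv_list f n : size (sinv_list f n) = n.+1.
Proof. by elim: n => //= n IHn; rewrite size_rcons IHn. Qed.

Lemma nth_sinv_list f n i : (i <= n)%N -> nth 0 (sinv_list f n) i = sinv f i.
Proof.
elim: n => [|n IHn] le_in; first by move: le_in; rewrite leqn0 => /eqP ->.
rewrite /= nth_rcons size_sinv_list; case: ltnP => [lt_in | le_ni]; first exact: IHn.
have -> : i = n.+1 by apply/eqP; rewrite eqn_leq le_in le_ni.
by rewrite /sinv /= nth_rcons size_sinv_list ltnn eqxx.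
Qed.

Lemma sinvS f m :
  sinv f m.+1 = - (f 0%N)^-1 * \sum_(i < m.+1) f i.+1 * sinv f (m - i)%N.
Proof.
rewrite /sinv /= nth_rcons size_sinv_list ltnn eqxx; congr (_ * _).
by apply: eq_bigr => i _; rewrite nth_sinv_list // leq_subr.
Qed.

Lemma smul_sinv f : f 0%N != 0 -> f * sinv f = 1.
Proof.
move=> f0_neq0; apply: funext => -[|m]; first by rewrite coefM0 /sinv /= divff.
rewrite coefMs big_ord_recl subn0 sinvS coef1s mulrA mulrN divff // mulN1r.
by under eq_bigr => i _ do rewrite /bump /=; rewrite addNr.
Qed.

Definition series_unit : {pred series K} := fun f => f 0%N != 0.
Definition series_inv f : series K := if f 0%N != 0 then sinv f else f.

Lemma series_mulVr : {in series_unit, left_inverse 1 series_inv *%R}.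
Proof. by move=> f f0_neq0; rewrite /series_inv ifT // mulrC smul_sinv. Qed.

Lemma series_unitPl f g : g * f = 1 -> series_unit f.
Proof.
move=> /(congr1 (fun h : series K => h 0%N)); rewrite coefM0 coef1s => gf0.
by apply/eqP => f0; move: gf0; rewrite f0 mulr0 => /eqP; rewrite eq_sym oner_eq0.
Qed.

Lemma series_inv_out : {in [predC series_unit], series_inv =1 id}.
Proof. by move=> f f0_eq0; rewrite /series_inv ifF //; apply/negbTE. Qed.

End SeriesInverse.

HB.instance Definition _ (K : fieldType) :=
  GRing.ComNzRing_hasMulInverse.Build (series K)
    (@series_mulVr K) (@series_unitPl K) (@series_inv_out K).

Section Composition.
Context {K : fieldType}.
Implicit Types f g s : series K.

Lemma unit_seriesE f : (f \is a GRing.unit) = (f 0%N != 0). Proof. by []. Qed.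

Lemma sinvE f : f 0%N != 0 -> sinv f = f^-1.
Proof. by rewrite /GRing.inv /= /series_inv => ->. Qed.

Lemma spowE f n : spow f n = f ^+ n.
Proof. by elim: n => // n IHn; rewrite exprS -IHn. Qed.

Lemma spowzE f z : f \is a GRing.unit -> spowz f z = f ^ z.
Proof.
move=> f_unit; case: z => n; rewrite /spowz spowE //.
by rewrite sinvE // -unit_seriesE unitrX.
Qed.

Lemma coef_spow_trunc s n k i : (i <= n)%N -> spow s k i = ((trunc n s) ^+ k)`_i.
Proof.
elim: k i => [|k IHk] i le_in; first by rewrite expr0 coef1; case: i le_in.
rewrite exprS coefM /= smulE coefMs; apply: eq_bigr => j _.
have le_jn : (j <= n)%N by apply: leq_trans le_in; rewrite -ltnS.
by rewrite coef_trunc // IHk // (leq_trans (leq_subr _ _) le_in).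
Qed.

Lemma coef_spow_lt s k i : s 0%N = 0 -> (i < k)%N -> spow s k i = 0.
Proof.
move=> s0; elim: k i => [|k IHk] i // lt_ik.
rewrite /= smulE coefMs big1 // => -[[|j] lt_ji] _ /=; first by rewrite s0 mul0r.
by rewrite IHk ?mulr0 //; lia.
Qed.

Lemma sum_ord_widen0 (V : nmodType) (F : nat -> V) m n : (m <= n)%N ->
  (forall k, (m <= k < n)%N -> F k = 0) -> \sum_(k < n) F k = \sum_(k < m) F k.
Proof.
move=> le_mn F0; rewrite (big_ord_widen n F le_mn) [RHS]big_mkcond /=.
apply: eq_bigr => k _; case: ifP => // /negbT; rewrite -leqNgt => le_mk.
by rewrite F0 // le_mk ltn_ord.
Qed.

(* Since s has no constant term, s^k starts at order k, so only the terms of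
   f of order at most n contribute below order n. *)
Lemma trunc_scomp f s p n : s 0%N = 0 -> eq_upto n p (trunc n f) ->
  eq_upto n (trunc n (scomp f s)) (p \Po trunc n s).
Proof.
move=> s0 Hp i le_in; rewrite coef_trunc // coef_comp_poly /scomp.
set M := maxn (size p) n.+1.
rewrite -(@sum_ord_widen0 _ (fun k => p`_k * ((trunc n s) ^+ k)`_i) _ M); first last.
- by move=> k /andP[le_pk _]; rewrite nth_default // mul0r.
- exact: leq_maxl.
rewrite -(@sum_ord_widen0 _ (fun k => f k * spow s k i) _ M); first last.
- by move=> k /andP[lt_ik _]; rewrite coef_spow_lt // mulr0.
- by rewrite (leq_trans _ (leq_maxr _ _)).
apply: eq_bigr => k _; rewrite -coef_spow_trunc //.
have [le_ki | lt_ik] := leqP k i; last by rewrite coef_spow_lt // !mulr0.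
by rewrite Hp ?coef_trunc // (leq_trans le_ki).
Qed.

Lemma scompM f g s : s 0%N = 0 -> scomp (f * g) s = scomp f s * scomp g s.
Proof.
move=> s0; apply: (series_eq_upto (fun n => (trunc n f * trunc n g) \Po trunc n s)).
  move=> n; apply: trunc_scomp => // i le_in.
  by rewrite -(trunc_smul _ _ _ _ le_in).
move=> n; apply: eq_upto_trans (trunc_smul _ _ _) _; rewrite comp_polyM.
by apply: eq_uptoM; apply: trunc_scomp.
Qed.

Lemma scomp1 s : scomp 1 s = 1.
Proof.
apply: funext => n; rewrite /scomp big_ord_recl big1 ?addr0 => [|i _].
  by rewrite coef1s mul1r.
by rewrite coef1s mul0r.
Qed.

Lemma scompV f s : s 0%N = 0 -> f \is a GRing.unit ->
  scomp f^-1 s = (scomp f s)^-1.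
Proof.
by move=> s0 f_unit; apply/esym/mulr1_eq; rewrite -scompM // mulrV // scomp1.
Qed.

Lemma scomp_Xadd (c : K) s : s 0%N = 0 ->
  scomp (sadd (sX K) (sC c)) s = sadd s (sC c).
Proof.
move=> s0; apply: funext => -[|n].
  by rewrite /scomp big_ord1 /sadd /sX /sC /sone /= s0 add0r mulr1.
rewrite /scomp !big_ord_recl big1 => [|i _]; last by rewrite /sadd /sX /sC /= addr0 mul0r.
by rewrite /sadd /sX /sC /= smulE soneE mulr1 coef1s mulr0 !addr0 add0r mul1r.
Qed.

End Composition.

Section GradedComponents.
Context {K : fieldType}.
Implicit Types f g : series K.

Lemma s1mXE : s1mX K = 1 - sX K. Proof. by []. Qed.

Lemma s1mX_unit : s1mX K \is a GRing.unit.
Proof. by rewrite unit_seriesE /s1mX /sadd /sopp /sone /sX /= subr0 oner_eq0. Qed.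

Lemma sMoeb0 : sMoeb K 0%N = 0.
Proof. by rewrite /sMoeb smulE coefM0 /sX /= mul0r. Qed.

Lemma inFE r f : inF r f <-> scomp f (sMoeb K) = s1mX K ^ r * f.
Proof. by rewrite /inF smulE spowzE // s1mX_unit. Qed.

Lemma inF_mul {r1 r2 f g} : inF r1 f -> inF r2 g -> inF (r1 + r2) (f * g).
Proof.
rewrite !inFE => Hf Hg.
by rewrite scompM ?sMoeb0 // Hf Hg exprzDr ?s1mX_unit // mulrACA.
Qed.

Lemma inF_inv r f : f \is a GRing.unit -> inF r f -> inF (- r) f^-1.
Proof.
rewrite !inFE => f_unit Hf; rewrite scompV ?sMoeb0 // Hf.
by rewrite invrM ?unitrXz ?s1mX_unit // invr_expz mulrC.
Qed.

Lemma inF_one : inF 0 (1 : series K).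
Proof. by rewrite inFE scomp1 expr0z mul1r. Qed.

Lemma inF_exprn r f n : inF r f -> inF (r * n%:Z) (f ^+ n).
Proof.
move=> Hf; elim: n => [|n IHn]; first by rewrite mulr0 expr0; exact: inF_one.
by rewrite exprS intS mulrDr mulr1; exact: inF_mul.
Qed.

Lemma inF_exprz r f (j : int) : f \is a GRing.unit -> inF r f -> inF (r * j) (f ^ j).
Proof.
move=> f_unit Hf; case: j => n; first exact: inF_exprn.
by rewrite NegzE mulrN; apply: inF_inv; [exact: unitrX | exact: inF_exprn].
Qed.

Lemma sCN2 : sC (- 2) = - 2%:R :> series K.
Proof.
by apply: funext => -[|n]; rewrite /sC /= coefNs [in RHS]mulr2n coefDs coef1s ?addr0 ?oppr0.
Qed.

Lemma gm1E : gm1 K = sX K - 2%:R.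
Proof. by rewrite /gm1 saddE sCN2. Qed.

Lemma inF_gm1 : inF (-1) (gm1 K).
Proof.
rewrite inFE scomp_Xadd ?sMoeb0 // saddE sCN2 exprN1.
apply: (mulrI s1mX_unit); rewrite mulVKr ?s1mX_unit //.
have w_unit : sX K - 1 \is a GRing.unit.
  by rewrite unit_seriesE coefDs coefNs coef1s /sX /= sub0r oppr_eq0 oner_eq0.
have s1mX_Moeb : s1mX K * sMoeb K = - sX K.
  rewrite /sMoeb smulE sinvE -?unit_seriesE // s1mXE -opprB mulNr.
  by rewrite mulrCA mulrV ?mulr1.
by rewrite mulrBr s1mX_Moeb gm1E s1mXE; ring.
Qed.

End GradedComponents.

Section LaurentIsomorphism.
Context {K : fieldType}.
Hypothesis two_neq0 : (2 : K) != 0.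
Implicit Types c d f : zfam K.

Lemma gm1_unit : gm1 K \is a GRing.unit.
Proof. by rewrite unit_seriesE /gm1 /sadd /sX /sC /= add0r oppr_eq0. Qed.

Lemma inF_gm1_expz (j : int) : inF (- j) (gm1 K ^ j).
Proof. by rewrite -mulN1r; apply: inF_exprz; [exact: gm1_unit | exact: inF_gm1]. Qed.

Lemma PhiE c r : Phi c r = c (- r) * gm1 K ^ (- r).
Proof. by rewrite /Phi smulE spowzE // gm1_unit. Qed.

Lemma Phi_graded c : laurent_elt c -> graded_elt (Phi c).
Proof.
move=> [[N c_supp] c_F0]; split.
  by exists N => r lt_Nr; rewrite PhiE c_supp ?mul0r // abszN.
move=> r; rewrite PhiE.
by have := inF_mul (c_F0 (- r)) (inF_gm1_expz (- r)); rewrite opprK add0r.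
Qed.

Lemma Phi_inj : injective (@Phi K).
Proof.
move=> c d eq_cd; apply: funext => j.
have := congr1 (fun f => f (- j)) eq_cd; rewrite !PhiE opprK.
by apply: mulIr; exact/unitrXz/gm1_unit.
Qed.

Lemma Phi_surj f : graded_elt f -> exists c, laurent_elt c /\ Phi c = f.
Proof.
move=> [[N f_supp] f_F]; exists (fun j => f (- j) * gm1 K ^ (- j)); split.
  split; first by exists N => j lt_Nj; rewrite f_supp ?mul0r // abszN.
  by move=> j; have := inF_mul (f_F (- j)) (inF_gm1_expz (- j)); rewrite opprK addNr.
apply: funext => r; rewrite PhiE !opprK -mulrA -exprzDr ?gm1_unit //.
by rewrite subrr expr0z mulr1.
Qed.

Lemma PhiD c d : Phi (fadd c d) = fadd (Phi c) (Phi d).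
Proof. by apply: funext => r; rewrite /fadd !PhiE saddE mulrDl. Qed.

Lemma PhiZ (a : K) c : Phi (fscale a c) = fscale a (Phi c).
Proof.
apply: funext => r; rewrite /fscale !PhiE; apply: funext => n.
by rewrite /sscale !coefMs mulr_sumr; apply: eq_bigr => i _; rewrite mulrA.
Qed.

Lemma Phi1 : Phi (fone K) = fone K.
Proof.
apply: funext => r; rewrite PhiE /fone oppr_eq0.
by case: eqP => [-> | _]; rewrite ?oppr0 ?expr0z ?mulr1 // szeroE mul0r.
Qed.

Lemma fconvE N c d r :
  fconv N c d r = \sum_(i < (2 * N).+1) c (i%:Z - N%:Z) * d (r - (i%:Z - N%:Z)).
Proof. by apply: funext => n; rewrite coef_sum_series. Qed.

Lemma Phi_fconv N c d : Phi (fconv N c d) = fconv N (Phi c) (Phi d).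
Proof.
apply: funext => r; rewrite PhiE !fconvE mulr_suml [RHS](reindex_inj rev_ord_inj) /=.
apply: eq_bigr => i _.
have -> : ((2 * N).+1 - i.+1)%N%:Z - N%:Z = - (i%:Z - N%:Z) by have := ltn_ord i; lia.
move: (i%:Z - N%:Z) => a; rewrite !PhiE !opprK mulrACA -exprzDr ?gm1_unit //.
by rewrite opprD addrCA subrr addr0.
Qed.

End LaurentIsomorphism.

Lemma Kfield_two_neq0 (k : Kchoice) : (2 : Kfield k) != 0.
Proof. by case: k => //=; rewrite pnatr_eq0. Qed.

Theorem theorem3p4 (k : Kchoice) :
  let F := Kfield k in
  (* g_{-1} = x - 2 lies in F_{-1} *)
  inF (-1) (gm1 F) /\
  (* and is invertible in F[[x]] *)
  (exists h : series F, smul (gm1 F) h = sone F) /\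
  (* Phi maps F_0[T,T^-1] into F *)
  (forall c : zfam F, laurent_elt c -> graded_elt (Phi c)) /\
  (* Phi is bijective from F_0[T,T^-1] onto F *)
  (forall c d : zfam F, laurent_elt c -> laurent_elt d ->
     Phi c = Phi d -> c = d) /\
  (forall f : zfam F, graded_elt f ->
     exists c : zfam F, laurent_elt c /\ Phi c = f) /\
  (* Phi is a morphism of F-algebras *)
  (forall c d : zfam F, Phi (fadd c d) = fadd (Phi c) (Phi d)) /\
  (forall (a : F) (c : zfam F), Phi (fscale a c) = fscale a (Phi c)) /\
  Phi (fone F) = fone F /\
  (forall (N : nat) (c d : zfam F), laurent_elt c -> laurent_elt d ->
     supported_in N c -> supported_in N d ->
     Phi (fconv N c d) = fconv N (Phi c) (Phi d)).
Proof.
move=> F; have two_neq0 := Kfield_two_neq0 k.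
split; first exact: inF_gm1.
split; first by exists (gm1 F)^-1; rewrite smulE mulrV // gm1_unit.
split; first exact: Phi_graded.
split; first by move=> c d _ _; exact: Phi_inj.
split; first exact: Phi_surj.
split; first exact: PhiD.
split; first exact: PhiZ.
split; first exact: Phi1.
by move=> N c d *; exact: Phi_fconv.
Qed.
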